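(* Let $T$ be a commutative ring with identity, $S$ a unital subring and $I$ a nil ideal of $T$ with $T=S+I$ and $S\cap I=\{0\}$. If $S$ is roughly complemented and $I$ is an atorsion $S$-module, then $T$ is roughly complemented. If furthermore $I^2=0$, then the converse holds. In particular, for a commutative ring $R$ and $R$-module $M$, $R\propto M$ is roughly complemented if and only if $R$ is roughly complemented and $M$ is an atorsion $R$-module.
   Context: For a ring $A$: $\mathfrak{N}(A)$ is the nilradical, $\mathrm{reg}(A)$ the regular elements, $\mathrm{areg}(A)=\{x: x+\mathfrak{N}(A)\in\mathrm{reg}(A/\mathfrak{N}(A))\}$. $A$ is roughly complemented if for every $a\in A$ there is $b$ with $ab=0$ and $a+b\in\mathrm{areg}(A)$. An $A$-module $M$ is atorsion if for each $m\in M$ there is $r\in\mathrm{areg}(A)$ with $rm=0$. $R\propto M$ is $R\times M$ with coordinatewise addition and $(r,m)(s,n)=(rs,rn+sm)$. *)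

From HB Require Import structures.
From mathcomp Require Import all_boot all_order all_algebra.
Set Implicit Arguments. Unset Strict Implicit. Unset Printing Implicit Defensive.
Import Order.TTheory GRing.Theory Num.Theory.
Local Open Scope ring_scope.

Definition nilpotent_el (A : pzRingType) (x : A) : Prop := exists n : nat, x ^+ n = 0.

(* Notions relative to a subring S of A (given as a predicate S : pred A);
   for S = predT these are the notions for A itself.  Since S carries the
   operations of A, N(S) = S ∩ N(A). *)

(* x + N(S) is a regular element of S/N(S):
   for all y in S, (x+N(S))(y+N(S)) = 0 implies y + N(S) = 0,
   i.e. xy ∈ N(S) implies y ∈ N(S). *)
Definition areg_in (A : comPzRingType) (S : pred A) (x : A) : Prop :=
  x \in S /\ forall y, y \in S -> nilpotent_el (x * y) -> nilpotent_el y.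

Definition rough_compl_in (A : comPzRingType) (S : pred A) : Prop :=
  forall a, a \in S -> exists2 b, b \in S & a * b = 0 /\ areg_in S (a + b).

Definition areg (A : comPzRingType) (x : A) : Prop := areg_in predT x.
Definition roughly_complemented (A : comPzRingType) : Prop :=
  rough_compl_in (@predT A).

(* I is an atorsion S-module (S acting on I by multiplication in A). *)
Definition atorsion_in (A : comPzRingType) (S I : pred A) : Prop :=
  forall m, m \in I -> exists r, areg_in S r /\ r * m = 0.

Definition atorsion (R : comPzRingType) (M : lmodType R) : Prop :=
  forall m : M, exists r : R, areg r /\ r *: m = 0.

Definition unital_subring (A : pzRingType) (S : pred A) : Prop :=
  [/\ 1 \in S, forall x y, x \in S -> y \in S -> x - y \in S
    & forall x y, x \in S -> y \in S -> x * y \in S].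

Definition is_ideal (A : comPzRingType) (I : pred A) : Prop :=
  [/\ 0 \in I, forall x y, x \in I -> y \in I -> x + y \in I
    & forall t x, x \in I -> t * x \in I].

Definition nil_ideal (A : comPzRingType) (I : pred A) : Prop :=
  is_ideal I /\ forall x, x \in I -> nilpotent_el x.

Definition idealization (R : comPzRingType) (M : lmodType R) := (R * M)%type.

Section Idealization.
Variables (R : comPzRingType) (M : lmodType R).
Local Notation RM := (idealization M).
HB.instance Definition _ := GRing.Zmodule.copy RM (R * M)%type.

Definition id_one : RM := (1, 0).
Definition id_mul (x y : RM) : RM := (x.1 * y.1, x.1 *: y.2 + y.1 *: x.2).

Lemma id_mulA : associative id_mul.
Proof.
case=> a m [b n] [c p]; rewrite /id_mul /=; congr pair; first by rewrite mulrA.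
rewrite !scalerDr !scalerA [c * a]mulrC [c * b]mulrC [b * c]mulrC.
by rewrite addrA.
Qed.

Lemma id_mulC : commutative id_mul.
Proof. by case=> a m [b n]; rewrite /id_mul /= mulrC addrC. Qed.

Lemma id_mul1 : left_id id_one id_mul.
Proof. by case=> a m; rewrite /id_mul /= mul1r scale1r scaler0 addr0. Qed.

Lemma id_mulDl : left_distributive id_mul +%R.
Proof.
case=> a m [b n] [c p]; rewrite /id_mul /=; congr pair; first by rewrite mulrDl.
by rewrite scalerDl scalerDr; rewrite -!addrA; congr (_ + _);
  rewrite addrCA.
Qed.

HB.instance Definition _ := GRing.Zmodule_isComPzRing.Build RM
  id_mulA id_mulC id_mul1 id_mulDl.
End Idealization.

Notation "R ∝ M" := (@idealization R M) (at level 40, only parsing).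

From HB Require Import structures.
From mathcomp Require Import all_boot all_order all_algebra ring.

(* Call x almost regular when its image modulo the nilradical is regular.
   Adding a nilpotent element never destroys almost regularity, and when
   T = S + I with I nil, an element of S that is almost regular in S is
   almost regular in T.  So if a = s + i, b is a rough complement of s in S
   and r in S is almost regular with r i = 0, then b r is a rough complement
   of a: multiplying by s and by b, and using s b = 0, shows that s + b r
   is almost regular as soon as s + b and r are.  Conversely, when I^2 = 0,
   the S-component of a rough complement of a in S is a rough complement
   in S, and the S-component of a rough complement of m in I is almost
   regular and kills m.  R ∝ M is the case S = R × 0, I = 0 × M. *)

Set Implicit Arguments.
Unset Strict Implicit.
Unset Printing Implicit Defensive.
Import GRing.Theory.
Local Open Scope ring_scope.

Lemma unital_subringD (A : pzRingType) (S : pred A) (x y : A) :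
  unital_subring S -> x \in S -> y \in S -> x + y \in S.
Proof.
case=> S1 SB _ xS yS; have S0 : 0 \in S by rewrite -(subrr 1) SB.
have -> : x + y = x - (0 - y) by rewrite sub0r opprK.
by rewrite !SB.
Qed.

Section Nilpotent.
Variable A : comPzRingType.
Implicit Types x y z : A.

Lemma nilpotentD x y : nilpotent_el x -> nilpotent_el y -> nilpotent_el (x + y).
Proof.
case=> m hm [n hn]; exists (m + n)%N; rewrite exprDn big1 // => i _.
have [lt_in | le_ni] := ltnP i n.
  have -> : (m + n - i = m + (n - i))%N by rewrite addnBA // ltnW.
  by rewrite exprD hm !mul0r mul0rn.
have -> : i = (n + (i - n))%N :> nat by rewrite subnKC.
by rewrite exprD hn mul0r mulr0 mul0rn.
Qed.

Lemma nilpotentMl x y : nilpotent_el y -> nilpotent_el (x * y).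
Proof. by case=> n hn; exists n; rewrite exprMn hn mulr0. Qed.

Lemma nilpotentN x : nilpotent_el x -> nilpotent_el (- x).
Proof. by rewrite -mulN1r; apply: nilpotentMl. Qed.

Lemma nilpotentB x y : nilpotent_el x -> nilpotent_el y -> nilpotent_el (x - y).
Proof. by move=> nx /nilpotentN; apply: nilpotentD. Qed.

Lemma nilpotent_sqr x : nilpotent_el (x ^+ 2) -> nilpotent_el x.
Proof. by case=> n hn; exists (2 * n)%N; rewrite exprM. Qed.

Lemma aregP x : areg x <-> forall y, nilpotent_el (x * y) -> nilpotent_el y.
Proof. by split=> [[_ ax] y | ax]; [exact: ax | split=> // y _; exact: ax]. Qed.

Lemma areg_in_of_areg (S : pred A) x : x \in S -> areg x -> areg_in S x.
Proof. by move=> xS /aregP ax; split=> // y _; exact: ax. Qed.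

Lemma areg_addr_nilpotent x j : nilpotent_el j -> areg x -> areg (x + j).
Proof.
move=> nj /aregP ax; apply/aregP => y nxjy; apply: ax.
have njy : nilpotent_el (j * y) by rewrite mulrC; exact: nilpotentMl.
by rewrite -(addrK (j * y) (x * y)) -mulrDl; exact: nilpotentB.
Qed.

Lemma areg_orthogonal_addM (s b r : A) :
  s * b = 0 -> areg (s + b) -> areg r -> areg (s + b * r).
Proof.
move=> sb0 /aregP asb /aregP ar; apply/aregP => z nz.
have nsz : nilpotent_el (s * z).
  apply: nilpotent_sqr.
  have -> : (s * z) ^+ 2 = z * (s * ((s + b * r) * z)) - s * b * (r * z * z).
    by ring.
  by rewrite sb0 mul0r subr0; do 2!apply: nilpotentMl.
have nbz : nilpotent_el (b * z).
  apply: ar; apply: nilpotent_sqr.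
  have -> : (r * (b * z)) ^+ 2 =
            r * z * (b * ((s + b * r) * z)) - s * b * (z * r * z) by ring.
  by rewrite sb0 mul0r subr0; do 2!apply: nilpotentMl.
by apply: asb; rewrite mulrDl; exact: nilpotentD.
Qed.

End Nilpotent.

Section Decomposition.
Variables (T : comPzRingType) (S I : pred T).
Hypothesis decompose :
  forall t : T, exists s i, [/\ s \in S, i \in I & t = s + i].
Hypothesis nilI : forall i, i \in I -> nilpotent_el i.

Lemma areg_of_areg_in x : areg_in S x -> areg x.
Proof.
case=> _ ax; apply/aregP => y.
have [s [i [sS iI ->]]] := decompose y => nxy.
apply: nilpotentD (nilI iI); apply: ax sS _.
rewrite -(addrK (x * i) (x * s)) -mulrDr.
exact: nilpotentB nxy (nilpotentMl x (nilI iI)).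
Qed.

Lemma roughly_complemented_of_rough_compl_in :
  rough_compl_in S -> atorsion_in S I -> roughly_complemented T.
Proof.
move=> rcS atS a _.
have [s [i [sS iI ->]]] := decompose a.
have [b bS [sb0 asb]] := rcS s sS.
have [r [ar ri0]] := atS i iI.
exists (b * r) => //; split.
  by rewrite mulrDl mulrA sb0 mul0r add0r mulrCA (mulrC i) ri0 mulr0.
rewrite addrAC; apply: areg_addr_nilpotent (nilI iI) _.
by apply: areg_orthogonal_addM sb0 _ _; exact: areg_of_areg_in.
Qed.

Lemma atorsion_in_of_roughly_complemented :
  (forall x y, x \in I -> y \in I -> x * y = 0) ->
  roughly_complemented T -> atorsion_in S I.
Proof.
move=> sqI0 rcT m mI.
have [b _ [mb0 amb]] := rcT m isT.
have [s [i [sS iI eb]]] := decompose b; rewrite {b}eb in mb0 amb.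
exists s; split.
  apply: areg_in_of_areg sS _.
  have -> : s = m + (s + i) + - (m + i) by ring.
  by apply: areg_addr_nilpotent amb; apply/nilpotentN/nilpotentD; exact: nilI.
by move: mb0; rewrite mulrDr (sqI0 m i) // addr0 mulrC.
Qed.

Hypothesis subringS : unital_subring S.
Hypothesis idealI : is_ideal I.
Hypothesis disjSI : forall x, x \in S -> x \in I -> x = 0.

Lemma rough_compl_in_of_roughly_complemented :
  roughly_complemented T -> rough_compl_in S.
Proof.
have [_ _ SM] := subringS; have [_ _ IM] := idealI.
move=> rcT a aS.
have [b _ [ab0 aab]] := rcT a isT.
have [s [i [sS iI eb]]] := decompose b; rewrite {b}eb in ab0 aab.
exists s => //; split.
  apply: disjSI; first exact: SM.
  have -> : a * s = - a * i by apply/eqP; rewrite mulNr -addr_eq0 -mulrDr ab0.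
  exact: IM.
apply: areg_in_of_areg; first exact: unital_subringD.
have -> : a + s = a + (s + i) + - i by ring.
exact: areg_addr_nilpotent (nilpotentN (nilI iI)) aab.
Qed.

End Decomposition.

Section Transport.
Variables (R T : comPzRingType) (f : {rmorphism R -> T}) (S : pred T).
Hypothesis f_inj : injective f.
Hypothesis S_image : forall y, y \in S <-> exists x, y = f x.

Lemma rmorph_mem x : f x \in S.
Proof. by apply/S_image; exists x. Qed.

Lemma unital_subring_rmorph : unital_subring S.
Proof.
split; first by rewrite -(rmorph1 f) rmorph_mem.
  by move=> _ _ /S_image[x ->] /S_image[y ->]; rewrite -rmorphB rmorph_mem.
by move=> _ _ /S_image[x ->] /S_image[y ->]; rewrite -rmorphM rmorph_mem.
Qed.

Lemma nilpotent_rmorph x : nilpotent_el (f x) <-> nilpotent_el x.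
Proof.
split=> -[n hn]; exists n; last by rewrite -rmorphXn hn rmorph0.
by apply: f_inj; rewrite rmorphXn hn rmorph0.
Qed.

Lemma areg_in_rmorph x : areg_in S (f x) <-> areg x.
Proof.
split=> [[_ ax] | /aregP ax].
  apply/aregP => y nxy; apply/nilpotent_rmorph; apply: ax (rmorph_mem y) _.
  by rewrite -rmorphM; apply/nilpotent_rmorph.
split=> [|_ /S_image[y ->]]; first exact: rmorph_mem.
by rewrite -rmorphM => /nilpotent_rmorph/ax nxy; apply/nilpotent_rmorph.
Qed.

Lemma rough_compl_in_rmorph : rough_compl_in S <-> roughly_complemented R.
Proof.
split=> [rcS a _ | rcR _ /S_image[a ->]].
  have [_ /S_image[b ->]] := rcS _ (rmorph_mem a).
  rewrite -rmorphM -rmorphD => -[ab0 /areg_in_rmorph aab].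
  by exists b => //; split => //; apply: f_inj; rewrite ab0 rmorph0.
have [b _ [ab0 aab]] := rcR a isT.
exists (f b); first exact: rmorph_mem.
by rewrite -rmorphM -rmorphD ab0 rmorph0; split => //; apply/areg_in_rmorph.
Qed.

End Transport.

Section Idealization.
Variables (R : comPzRingType) (M : lmodType R).
Local Notation RM := (idealization M).

Lemma id_mulE (a b : R) (m n : M) :
  ((a, m) : RM) * (b, n) = (a * b, a *: n + b *: m).
Proof. by []. Qed.

Definition id_inl (r : R) : RM := (r, 0).

Lemma id_inl_is_zmod_morphism : zmod_morphism id_inl.
Proof. by move=> a b; congr pair; rewrite /= subr0. Qed.

Lemma id_inl_is_monoid_morphism : monoid_morphism id_inl.
Proof. by split=> // a b; rewrite /id_inl id_mulE !scaler0 addr0. Qed.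

HB.instance Definition _ :=
  GRing.isZmodMorphism.Build R RM id_inl id_inl_is_zmod_morphism.
HB.instance Definition _ :=
  GRing.isMonoidMorphism.Build R RM id_inl id_inl_is_monoid_morphism.

Lemma id_inl_inj : injective id_inl.
Proof. by move=> a b []. Qed.

Definition id_base : pred RM := [pred x | x.2 == 0].
Definition id_module : pred RM := [pred x | x.1 == 0].

Lemma id_baseP x : x \in id_base <-> exists r, x = id_inl r.
Proof.
case: x => a m; rewrite inE /=.
by split=> [/eqP -> | [r [_ ->]]] //; exists a.
Qed.

Lemma id_module_nil_ideal : nil_ideal id_module.
Proof.
split; first split.
- by rewrite inE.
- by case=> a m [b n]; rewrite !inE /= => /eqP -> /eqP ->; rewrite addr0.
- by case=> a m [b n]; rewrite !inE /= => /eqP ->; rewrite mulr0.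
case=> a m; rewrite inE /= => /eqP ->; exists 2%N.
by rewrite expr2 id_mulE mulr0 !scale0r addr0.
Qed.

Lemma id_decompose (t : RM) :
  exists s i, [/\ s \in id_base, i \in id_module & t = s + i].
Proof.
case: t => a m; exists (a, 0), (0, m); split; rewrite ?inE //=.
by congr pair; rewrite /= ?addr0 ?add0r.
Qed.

Lemma id_base_module0 x : x \in id_base -> x \in id_module -> x = 0.
Proof. by case: x => a m; rewrite !inE /= => /eqP -> /eqP ->. Qed.

Lemma id_module_mul0 x y : x \in id_module -> y \in id_module -> x * y = 0.
Proof.
case: x => a m; case: y => b n; rewrite !inE /= => /eqP -> /eqP ->.
by rewrite id_mulE mulr0 !scale0r addr0.
Qed.

Lemma atorsion_in_idealization : atorsion_in id_base id_module <-> atorsion M.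
Proof.
have aregE := areg_in_rmorph id_inl_inj id_baseP.
split=> [atI m | atM [a m]].
  have [r [ar rm0]] := atI (0, m) (eqxx _).
  have /id_baseP[a er] := ar.1; rewrite {r}er in ar rm0.
  exists a; split; first exact/aregE.
  by move: rm0; rewrite /id_inl id_mulE scaler0 addr0 => /(congr1 snd).
rewrite inE /= => /eqP ->; have [r [ar rm0]] := atM m.
exists (id_inl r); split; first exact/aregE.
by rewrite /id_inl id_mulE mulr0 rm0 scaler0 addr0.
Qed.

Lemma roughly_complemented_idealizationE :
  roughly_complemented RM <->
  rough_compl_in id_base /\ atorsion_in id_base id_module.
Proof.
have [[idI nilI] dec] := (id_module_nil_ideal, id_decompose).
split=> [rcT | [rcS atI]]; last first.
  exact: roughly_complemented_of_rough_compl_in dec nilI rcS atI.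
split.
  apply: rough_compl_in_of_roughly_complemented dec nilI _ idI
    id_base_module0 rcT.
  exact: unital_subring_rmorph id_baseP.
exact: atorsion_in_of_roughly_complemented dec nilI id_module_mul0 rcT.
Qed.

Lemma roughly_complemented_idealization :
  roughly_complemented RM <-> roughly_complemented R /\ atorsion M.
Proof.
rewrite roughly_complemented_idealizationE atorsion_in_idealization.
by rewrite (rough_compl_in_rmorph id_inl_inj id_baseP).
Qed.

End Idealization.

Theorem mainTheorem18 :
  (forall (T : comPzRingType) (S I : pred T),
     unital_subring S -> nil_ideal I ->
     (forall t : T, exists s i, [/\ s \in S, i \in I & t = s + i]) ->
     (forall x : T, x \in S -> x \in I -> x = 0) ->
     (rough_compl_in S -> atorsion_in S I -> roughly_complemented T) /\
     ((forall x y : T, x \in I -> y \in I -> x * y = 0) ->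
        roughly_complemented T -> rough_compl_in S /\ atorsion_in S I)) /\
  (forall (R : comPzRingType) (M : lmodType R),
     roughly_complemented (idealization M) <->
     roughly_complemented R /\ atorsion M).
Proof.
split=> [T S I subS [idI nilI] dec disj | R M]; last first.
  exact: roughly_complemented_idealization.
split; first exact: roughly_complemented_of_rough_compl_in.
move=> sqI0 rcT; split.
  exact: rough_compl_in_of_roughly_complemented dec nilI subS idI disj rcT.
exact: atorsion_in_of_roughly_complemented dec nilI sqI0 rcT.
Qed.
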